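(* Let $G$ be a finitely generated subgroup of $\mathrm{Aut}(X^* )$. Then $G$ has well-approximated subgroups if and only if $G$ is LERF and has the congruence subgroup property.
   Context: $X^*$ is the free monoid on a finite set $X$, viewed as a rooted tree; $X^n$ is level $n$, $\mathrm{Aut}(X^* )$ the group of prefix-preserving bijections, and $\mathrm{st}_G(n)$ the subgroup of $G$ fixing every vertex of $X^n$. $G$ has well-approximated subgroups if $\bigcap_{n\ge0}H\,\mathrm{st}_G(n)=H$ for every finitely generated $H\le G$. $G$ is LERF if every finitely generated subgroup is an intersection of finite index subgroups. $G$ has the congruence subgroup property if every finite index subgroup of $G$ contains $\mathrm{st}_G(n)$ for some $n$. *)

From mathcomp Require Import all_boot.
From Stdlib Require List.

Set Implicit Arguments.
Unset Strict Implicit.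
Unset Printing Implicit Defensive.

Section TreeAut.
Variable X : finType.

(* Elements of Aut(X^star) are represented by their underlying maps on X^star = seq X. *)
Definition tmap := seq X -> seq X.

Definition tree_aut (f : tmap) : Prop :=
  bijective f /\ forall u v : seq X, prefix u v = prefix (f u) (f v).

Record is_subgroup (H : tmap -> Prop) : Prop := {
  sub_aut  : forall f, H f -> tree_aut f;
  sub_id   : H id;
  sub_comp : forall f g, H f -> H g -> H (f \o g);
  sub_inv  : forall f, H f -> exists2 g, H g & cancel f g
}.

Definition subgroup_of (H G : tmap -> Prop) : Prop :=
  is_subgroup H /\ forall f, H f -> G f.

Definition gen (l : list tmap) : tmap -> Prop :=
  fun f => forall K, is_subgroup K -> (forall g, List.In g l -> K g) -> K f.

Definition fin_gen (H : tmap -> Prop) : Prop :=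
  exists l : list tmap, (forall g, List.In g l -> H g) /\ (forall f, H f <-> gen l f).

Definition st (G : tmap -> Prop) (n : nat) : tmap -> Prop :=
  fun f => G f /\ forall v : seq X, size v = n -> f v = v.

Definition setmul (H K : tmap -> Prop) : tmap -> Prop :=
  fun f => exists h k, H h /\ K k /\ f = h \o k.

Definition finite_index (G K : tmap -> Prop) : Prop :=
  exists reps : list tmap, (forall r, List.In r reps -> G r) /\
    forall g, G g -> exists r, List.In r reps /\ exists k, K k /\ g = r \o k.

Definition well_approximated (G : tmap -> Prop) : Prop :=
  forall H, subgroup_of H G -> fin_gen H ->
    forall f, (forall n, setmul H (st G n) f) <-> H f.

Definition LERF (G : tmap -> Prop) : Prop :=
  forall H, subgroup_of H G -> fin_gen H ->
    forall f, H f <->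
      (forall K, subgroup_of K G -> finite_index G K ->
         (forall h, H h -> K h) -> K f).

Definition congruence_subgroup_property (G : tmap -> Prop) : Prop :=
  forall K, subgroup_of K G -> finite_index G K ->
    exists n, forall f, st G n f -> K f.

End TreeAut.

(* The level stabilisers [st G n] form a decreasing chain of normal subgroups
   of finite index, so each [H st_G(n)] is a finite-index subgroup containing
   [H]: well-approximated subgroups therefore give LERF, and conversely LERF
   plus the congruence subgroup property (every finite-index [K] contains some
   [st_G(n)]) give well-approximated subgroups.  For the congruence subgroup
   property, a finite-index [K] of the finitely generated [G] contains a
   finitely generated subgroup [H] of finite index (Schreier generators).
   Approximation separates each of the finitely many coset representatives
   outside [H] from [H] at a common level [N].  If [f = r h] with [f] in
   [st_G(N)] and [h] in [H], normality of [st_G(N)] puts [r] in [H st_G(N)],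
   hence in [H]; so [st_G(N)] is contained in [H], hence in [K]. *)

From mathcomp Require Import all_boot.
From Stdlib Require Import FunctionalExtensionality Classical.

Set Implicit Arguments.
Unset Strict Implicit.
Unset Printing Implicit Defensive.

Lemma prefix_size_lt (T : eqType) (s t : seq T) :
  prefix s t -> s != t -> size s < size t.
Proof.
move=> st nst; rewrite ltn_neqAle size_prefix // andbT.
by apply: contraNneq nst => e; move: st; rewrite prefixE e take_size => /eqP->.
Qed.

Lemma prefix_common (T : eqType) (s t w : seq T) :
  prefix s w -> prefix t w -> size s = size t -> s = t.
Proof. by rewrite !prefixE => /eqP es /eqP et e; rewrite -es -et e. Qed.

Lemma In_mem (T : eqType) (x : T) (s : seq T) : x \in s -> List.In x s.
Proof. by elim: s => //= y s IH; rewrite in_cons => /orP[/eqP->|/IH]; [left|right]. Qed.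

Lemma list_choice (A B : Type) (P : A -> B -> Prop) (l : list A) :
  (forall x, List.In x l -> exists y, P x y) ->
  exists l' : list B,
    (forall x, List.In x l -> exists2 y, List.In y l' & P x y) /\
    (forall y, List.In y l' -> exists2 x, List.In x l & P x y).
Proof.
elim: l => [|a l IH] hP; first by exists [::].
have [b Pab] := hP a (or_introl erefl).
have [l' [Hl' Hl'']] := IH (fun x lx => hP x (or_intror lx)).
exists (b :: l'); split=> [x [<-|/Hl'[y ly Pxy]]|y [<-|/Hl''[x lx Pxy]]].
- by exists b => //; left.
- by exists y => //; right.
- by exists a => //; left.
- by exists x => //; right.
Qed.

Section TreeAutomorphisms.
Variable X : finType.
Implicit Types (f g : tmap X) (v w : seq X).

Lemma tree_aut_inv f g : tree_aut f -> cancel f g -> tree_aut g.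
Proof.
case=> bf pf fg; have gf : cancel g f by apply/(bij_can_sym bf).
by split=> [|u v]; [exists f | rewrite [RHS]pf !gf].
Qed.

Lemma tree_aut_size_ge f v : tree_aut f -> size v <= size (f v).
Proof.
case=> [[g fg _] pf]; elim/last_ind: v => // u a IH.
have lt : size (f u) < size (f (rcons u a)).
  apply: prefix_size_lt; first by rewrite -pf prefix_rcons.
  by apply/eqP => /(can_inj fg)/(congr1 size); rewrite size_rcons; apply: n_Sn.
by rewrite size_rcons (leq_ltn_trans IH lt).
Qed.

Lemma tree_aut_size f v : tree_aut f -> size (f v) = size v.
Proof.
move=> af; have [[g fg _] _] := af.
apply/eqP; rewrite eqn_leq (tree_aut_size_ge v af) andbT.
by rewrite -{2}(fg v); apply: tree_aut_size_ge (tree_aut_inv af fg).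
Qed.

Lemma tree_aut_fix_prefix f v w : tree_aut f -> prefix v w -> f w = w -> f v = v.
Proof.
move=> af vw fw; apply: (prefix_common _ vw); last exact: tree_aut_size.
by rewrite -fw -af.2.
Qed.

End TreeAutomorphisms.

Lemma sub_inv_can (X : finType) (G : tmap X -> Prop) f :
  is_subgroup G -> G f -> exists g, [/\ G g, cancel f g & cancel g f].
Proof.
move=> HG Gf; have [g Gg fg] := sub_inv HG Gf; exists g; split=> //.
by apply/(bij_can_sym (sub_aut HG Gf).1).
Qed.

Section Subgroups.
Variables (X : finType) (G : tmap X -> Prop).
Hypothesis HG : is_subgroup G.
Implicit Types (f g : tmap X) (H K : tmap X -> Prop).

Lemma st_subgroup n : subgroup_of (st G n) G.
Proof.
split; last by move=> f [].
split.
- by move=> f [/(sub_aut HG)].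
- by split=> //; exact: (sub_id HG).
- move=> f g [Gf fn] [Gg gn]; split; first exact: (sub_comp HG Gf Gg).
  by move=> v sv /=; rewrite gn ?fn.
- move=> f [Gf fn]; have [g [Gg fg _]] := sub_inv_can HG Gf.
  by exists g => //; split=> // v sv; rewrite -{1}(fn v sv) fg.
Qed.

Lemma st_normal n g g' s :
  G g -> G g' -> cancel g g' -> st G n s -> st G n (g' \o s \o g).
Proof.
move=> Gg Gg' gg' [Gs sn]; split.
  exact: (sub_comp HG (sub_comp HG Gg' Gs) Gg).
by move=> v sv /=; rewrite sn ?gg' // tree_aut_size //; exact: (sub_aut HG Gg).
Qed.

Lemma st_antimono n m f : n <= m -> st G m f -> st G n f.
Proof.
move=> nm [Gf fm]; have af := sub_aut HG Gf; split=> // -[|x v] sv.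
  by apply/size0nil; rewrite tree_aut_size.
apply: (tree_aut_fix_prefix af (prefix_prefix _ (nseq (m - n) x))); apply: fm.
by rewrite size_cat size_nseq sv subnKC.
Qed.

Lemma finite_index_of_code K (T : finType) (code : tmap X -> T) :
  (forall g g' gi, G g -> G g' -> G gi -> cancel g gi ->
     code g = code g' -> K (gi \o g')) ->
  finite_index G K.
Proof.
move=> codeK.
pose P c r := G r /\ ((exists2 g, G g & code g = c) -> code r = c).
have Pex c : exists r, P c r.
  have [[g Gg gc]|nc] := classic (exists2 g, G g & code g = c).
    by exists g; split=> // _.
  by exists id; split=> [|/nc //]; exact: (sub_id HG).
have [reps [repsP repsG]] := list_choice (fun c (_ : List.In c (enum T)) => Pex c).
exists reps; split=> [r /repsG[c _ []] //|g Gg].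
have [r rreps [Gr rc]] := repsP (code g) (In_mem (mem_enum _ _)).
have [ri [Gri rri rir]] := sub_inv_can HG Gr.
exists r; split=> //; exists (ri \o g); split.
  by apply: (codeK _ _ _ Gr Gg Gri rri); apply: rc; exists g.
by apply: functional_extensionality => x /=; rewrite rir.
Qed.

(* The coset [g st_G(n)] is determined by the action of [g] on level [n]. *)
Lemma st_finite_index n : finite_index G (st G n).
Proof.
pose T := n.-tuple X; pose code g : {ffun T -> T} := [ffun t : T => insubd t (g t)].
apply: (@finite_index_of_code _ _ code) => g g' gi Gg Gg' Ggi ggi e.
split=> [|v /eqP sv /=]; first exact: (sub_comp HG Ggi Gg').
have := congr1 (fun c : {ffun T -> T} => val (c (Tuple sv))) e.
rewrite /= !ffunE !val_insubd /= !tree_aut_size ?sv; last 2 first.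
- exact: (sub_aut HG Gg').
- exact: (sub_aut HG Gg).
by move=> <-; rewrite ggi.
Qed.

Lemma finite_index_subset K K' :
  finite_index G K -> (forall f, K f -> K' f) -> finite_index G K'.
Proof.
move=> [reps [repsG cov]] KK'; exists reps; split=> // g /cov[r [rreps [k [Kk ->]]]].
by exists r; split=> //; exists k; split=> //; apply: KK'.
Qed.

Lemma setmul_normal_subgroup H N :
  subgroup_of H G -> subgroup_of N G ->
  (forall g g' s, G g -> G g' -> cancel g g' -> N s -> N (g' \o s \o g)) ->
  subgroup_of (setmul H N) G.
Proof.
move=> [HH HG'] [HN NG'] nN.
have inG f : setmul H N f -> G f.
  by case=> h [s [Hh [Ns ->]]]; exact: (sub_comp HG (HG' _ Hh) (NG' _ Ns)).
split=> //; split.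
- by move=> f /inG /(sub_aut HG).
- by exists id, id; do !split; [exact: (sub_id HH) | exact: (sub_id HN)].
- move=> _ _ [h1 [s1 [Hh1 [Ns1 ->]]]] [h2 [s2 [Hh2 [Ns2 ->]]]].
  have [h2' [Hh2' h2K h2'K]] := sub_inv_can HH Hh2.
  exists (h1 \o h2), ((h2' \o s1 \o h2) \o s2); split; first exact: (sub_comp HH Hh1 Hh2).
  split; last by apply: functional_extensionality => x /=; rewrite h2'K.
  by apply: (sub_comp HN _ Ns2); apply: nN => //; apply: HG'.
- move=> _ [h [s [Hh [Ns ->]]]].
  have [h' [Hh' hK h'K]] := sub_inv_can HH Hh.
  have [s' [Ns' sK _]] := sub_inv_can HN Ns.
  exists (h' \o (h \o s' \o h')); last by move=> x /=; rewrite !hK sK.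
  exists h', (h \o s' \o h'); do !split=> //.
  exact: (nN _ _ _ (HG' _ Hh') (HG' _ Hh) h'K Ns').
Qed.

Lemma setmul_st_subgroup H n : subgroup_of H G -> subgroup_of (setmul H (st G n)) G.
Proof.
by move=> sHG; apply: setmul_normal_subgroup sHG (st_subgroup n) _ => *; apply: st_normal.
Qed.

Lemma setmul_st_antimono H n m f :
  n <= m -> setmul H (st G m) f -> setmul H (st G n) f.
Proof.
move=> nm [h [s [Hh [sts ->]]]]; exists h, s.
by split=> //; split=> //; exact: st_antimono nm sts.
Qed.

Lemma gen_subgroup l : (forall s, List.In s l -> G s) -> is_subgroup (gen l).
Proof.
move=> lG; have genG f : gen l f -> G f by apply.
split.
- by move=> f /genG /(sub_aut HG).
- by move=> K HK _; exact: (sub_id HK).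
- by move=> f g hf hg K HK lK; exact: (sub_comp HK (hf K HK lK) (hg K HK lK)).
- move=> f hf; have [g [_ fg _]] := sub_inv_can HG (genG f hf).
  exists g => // K HK lK; have [g' Kg' fg'] := sub_inv HK (hf K HK lK).
  suff -> : g = g' by [].
  exact/functional_extensionality/(bij_can_eq (sub_aut HG (genG f hf)).1).
Qed.

Lemma fin_gen_monoid_ind l (P : tmap X -> Prop) :
  (forall f, G f -> gen l f) -> (forall s, List.In s l -> G s) ->
  P id -> (forall f g, P f -> P g -> P (f \o g)) ->
  (forall s, List.In s l -> P s /\ exists s', [/\ G s', cancel s s' & P s']) ->
  forall f, G f -> P f.
Proof.
move=> Ggen lG Pid Pcomp Pl.
pose Q f := [/\ G f, P f & exists f', [/\ G f', cancel f f' & P f']].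
suff HQ : is_subgroup Q.
  by move=> f /Ggen/(_ Q HQ) []// s ls; have [Ps Ps'] := Pl s ls; split=> //; apply: lG.
split.
- by move=> f [/(sub_aut HG)].
- by split=> //; [exact: (sub_id HG) | exists id; split=> //; exact: (sub_id HG)].
- move=> f g [Gf Pf [f' [Gf' ff' Pf']]] [Gg Pg [g' [Gg' gg' Pg']]].
  split; [exact: (sub_comp HG Gf Gg) | exact: Pcomp |].
  exists (g' \o f'); split; first exact: (sub_comp HG Gg' Gf').
    by move=> x /=; rewrite ff'.
  exact: Pcomp.
- move=> f [Gf Pf [f' [Gf' ff' Pf']]]; exists f' => //; split=> //.
  by exists f; split=> //; apply/(bij_can_sym (sub_aut HG Gf).1).
Qed.

(* Schreier generators: the [K]-parts of [s r] for generators [s] of [G] (and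
   their inverses) and coset representatives [r] of [K]. *)
Lemma finite_index_fin_gen_subgroup K :
  fin_gen G -> subgroup_of K G -> finite_index G K ->
  exists S, (forall s, List.In s S -> K s) /\ finite_index G (gen S).
Proof.
move=> [l [lG Gl]] [_ KG] [R [RG cov]].
have [li [liP liG]] := list_choice (fun s (ls : List.In s l) => sub_inv_can HG (lG s ls)).
pose L := (l ++ li)%list.
have LG s : List.In s L -> G s by move=> /(List.in_app_or l li)[/lG //|/liG[t _ []]].
pose R' := id :: R.
have R'G r : List.In r R' -> G r by case=> [<-|/RG //]; exact: (sub_id HG).
have dec p : List.In p (List.list_prod L R') ->
    exists k, K k /\ exists2 r', List.In r' R' & p.1 \o p.2 = r' \o k.
  case: p => s r /List.in_prod_iff [Ls Rr].
  have [r' [Rr' [k [Kk e]]]] := cov _ (sub_comp HG (LG s Ls) (R'G r Rr)).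
  by exists k; split=> //; exists r' => //; right.
have [S [SP SK']] := list_choice dec.
have SK k : List.In k S -> K k by case/SK' => p _ [].
have HS := gen_subgroup (fun k Sk => KG k (SK k Sk)).
pose P g := forall r, List.In r R' ->
  exists2 r', List.In r' R' & exists2 h, gen S h & g \o r = r' \o h.
have PL s : List.In s L -> P s.
  move=> Ls r Rr; have [k Sk [_ [r' Rr' e]]] := SP (s, r) (List.in_prod _ _ _ _ Ls Rr).
  by exists r' => //; exists k => // K' _; apply.
have PG : forall g, G g -> P g.
  apply: (fin_gen_monoid_ind (l := l)) => //.
  - by move=> g /Gl.
  - by move=> r Rr; exists r => //; exists id => //; exact: (sub_id HS).
  - move=> f g Pf Pg r Rr.
    have [r1 Rr1 [h1 Sh1 e1]] := Pg r Rr; have [r2 Rr2 [h2 Sh2 e2]] := Pf r1 Rr1.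
    exists r2 => //; exists (h2 \o h1); first exact: (sub_comp HS Sh2 Sh1).
    change (f \o (g \o r) = r2 \o (h2 \o h1)); rewrite e1.
    by change ((f \o r1) \o h1 = (r2 \o h2) \o h1); rewrite e2.
  - move=> s ls; split; first by apply: PL; apply: List.in_or_app; left.
    have [s' ls' [Gs' ss' _]] := liP s ls.
    by exists s'; split=> //; apply: PL; apply: List.in_or_app; right.
exists S; split=> //; exists R'; split=> // g Gg.
have [r' Rr' [h Sh e]] := PG g Gg id (or_introl erefl).
by exists r'; split=> //; exists h.
Qed.

Lemma LERF_CSP_well_approximated :
  LERF G -> congruence_subgroup_property G -> well_approximated G.
Proof.
move=> lerf csp H sHG fgH f; split=> [approx|Hf n].
  apply/(lerf H sHG fgH f) => K sKG Kfi HK.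
  have [n stK] := csp K sKG Kfi.
  have [h [k [Hh [stk ->]]]] := approx n.
  exact: (sub_comp sKG.1 (HK _ Hh) (stK _ stk)).
by exists f, id; split=> //; split=> //; exact: (sub_id (st_subgroup n).1).
Qed.

Lemma well_approximated_LERF : well_approximated G -> LERF G.
Proof.
move=> wa H sHG fgH f; split=> [Hf K _ _ HK|sep]; first exact: HK.
apply/(wa H sHG fgH f) => n; apply: sep.
- exact: setmul_st_subgroup.
- apply: finite_index_subset (st_finite_index n) _ => k stk.
  by exists id, k; split; [exact: (sub_id sHG.1) | split].
- by move=> h Hh; exists h, id; split=> //; split=> //; exact: (sub_id (st_subgroup n).1).
Qed.

Lemma well_approximated_uniform H (R : list (tmap X)) :
  well_approximated G -> subgroup_of H G -> fin_gen H ->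
  exists N, forall r, List.In r R -> setmul H (st G N) r -> H r.
Proof.
move=> wa sHG fgH; elim: R => [|r R [N HN]]; first by exists 0.
have [Hr|nHr] := classic (H r).
  by exists N => r' [<- //|/HN].
have [M nM] : exists M, ~ setmul H (st G M) r.
  by apply: not_all_ex_not => approx; apply/nHr/(wa H sHG fgH r).
exists (maxn N M) => r' [<- /(setmul_st_antimono (leq_maxr N M)) //|Rr'].
by move/(setmul_st_antimono (leq_maxl N M)); apply: HN.
Qed.

(* If [f = r h] with [f] in [st_G(N)], then [r = h^-1 (h f h^-1)] lies in [H st_G(N)]. *)
Lemma well_approximated_st_sub H :
  well_approximated G -> subgroup_of H G -> fin_gen H -> finite_index G H ->
  exists N, forall f, st G N f -> H f.
Proof.
move=> wa sHG fgH [R [_ cov]].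
have [N HN] := well_approximated_uniform R wa sHG fgH.
exists N => f stf; have [r [Rr [h [Hh e]]]] := cov f stf.1.
have [h' [Hh' hh' h'h]] := sub_inv_can sHG.1 Hh.
have Hr : H r.
  apply: (HN _ Rr); exists h', (h \o f \o h'); split=> //; split.
    exact: (st_normal (sHG.2 _ Hh') (sHG.2 _ Hh) h'h stf).
  by apply: functional_extensionality => x /=; rewrite hh' e /= h'h.
by rewrite e; exact: (sub_comp sHG.1 Hr Hh).
Qed.

Lemma well_approximated_CSP :
  fin_gen G -> well_approximated G -> congruence_subgroup_property G.
Proof.
move=> fgG wa K sKG Kfi.
have [S [SK fiS]] := finite_index_fin_gen_subgroup fgG sKG Kfi.
have SG s : List.In s S -> G s by move/SK; apply: sKG.2.
have sSG : subgroup_of (gen S) G by split=> [|f]; [exact: gen_subgroup | apply].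
have fgS : fin_gen (gen S) by exists S; split=> // s Ss K' _; apply.
have [N HN] := well_approximated_st_sub wa sSG fgS fiS.
by exists N => f /HN; apply; [exact: sKG.1 | exact: SK].
Qed.

End Subgroups.

Theorem lemma2p12 (X : finType) (G : tmap X -> Prop) :
  is_subgroup G -> fin_gen G ->
  (well_approximated G <-> LERF G /\ congruence_subgroup_property G).
Proof.
move=> HG fgG; split=> [wa|[lerf csp]].
  by split; [exact: well_approximated_LERF | exact: well_approximated_CSP].
exact: LERF_CSP_well_approximated.
Qed.
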